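(* Let $n<\omega$ and let $\mathcal{K}$ be a class of simple algebras of $\mathbf{M}_n$ such that the variety $\mathbf{V}(\mathcal{K})$ generated by $\mathcal{K}$ is locally finite. Then every finite simple algebra in $\mathbf{V}(\mathcal{K})$ is isomorphic to a subalgebra of a member of $\mathcal{K}$.
   Context: $\mathbf{M}_n$ is the variety of pseudocomplemented de Morgan algebras $(L;\wedge,\vee,{}^\ast,{}^\prime,0,1)$ (bounded distributive lattice, pseudocomplement ${}^\ast$, de Morgan involution ${}^\prime$) satisfying $x\wedge x^{\prime\ast\prime}\le y\vee y^\ast$ and $(x\wedge x^{\prime\ast})^{n(\prime\ast)}=(x\wedge x^{\prime\ast})^{(n+1)(\prime\ast)}$, where $x^{0(\prime\ast)}=x$, $x^{(k+1)(\prime\ast)}=((x^{k(\prime\ast)})')^\ast$. Simple algebras are non-trivial. *)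

From Stdlib Require Import List.

Record sig_alg : Type := SigAlg {
  car :> Type;
  meet : car -> car -> car;
  join : car -> car -> car;
  pstar : car -> car;
  dprime : car -> car;
  bot : car;
  top : car
}.

Arguments meet {s} _ _.
Arguments join {s} _ _.
Arguments pstar {s} _.
Arguments dprime {s} _.
Arguments bot {s}.
Arguments top {s}.

Definition le {A : sig_alg} (x y : A) : Prop := meet x y = x.

Fixpoint iter_ps {A : sig_alg} (k : nat) (x : A) : A :=
  match k with
  | O => x
  | S k' => pstar (dprime (iter_ps k' x))
  end.

Definition is_bdl (A : sig_alg) : Prop :=
  (forall x y z : A, meet x (meet y z) = meet (meet x y) z) /\
  (forall x y z : A, join x (join y z) = join (join x y) z) /\
  (forall x y : A, meet x y = meet y x) /\
  (forall x y : A, join x y = join y x) /\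
  (forall x y : A, meet x (join x y) = x) /\
  (forall x y : A, join x (meet x y) = x) /\
  (forall x y z : A, meet x (join y z) = join (meet x y) (meet x z)) /\
  (forall x : A, join x bot = x) /\
  (forall x : A, meet x top = x).

Definition is_pseudocompl (A : sig_alg) : Prop :=
  forall x y : A, meet x y = bot <-> le y (pstar x).

Definition is_demorgan (A : sig_alg) : Prop :=
  (forall x : A, dprime (dprime x) = x) /\
  (forall x y : A, dprime (meet x y) = join (dprime x) (dprime y)) /\
  (forall x y : A, dprime (join x y) = meet (dprime x) (dprime y)) /\
  dprime (@bot A) = top /\ dprime (@top A) = bot.

Definition in_Mn (n : nat) (A : sig_alg) : Prop :=
  is_bdl A /\ is_pseudocompl A /\ is_demorgan A /\
  (forall x y : A, le (meet x (dprime (pstar (dprime x)))) (join y (pstar y))) /\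
  (forall x : A, iter_ps n (meet x (pstar (dprime x)))
                 = iter_ps (S n) (meet x (pstar (dprime x)))).

Definition is_hom {A B : sig_alg} (f : A -> B) : Prop :=
  (forall x y, f (meet x y) = meet (f x) (f y)) /\
  (forall x y, f (join x y) = join (f x) (f y)) /\
  (forall x, f (pstar x) = pstar (f x)) /\
  (forall x, f (dprime x) = dprime (f x)) /\
  f bot = bot /\ f top = top.

Definition injective {X Y : Type} (f : X -> Y) : Prop :=
  forall x y, f x = f y -> x = y.
Definition surjective {X Y : Type} (f : X -> Y) : Prop :=
  forall y, exists x, f x = y.

Definition is_congruence {A : sig_alg} (th : A -> A -> Prop) : Prop :=
  (forall x, th x x) /\ (forall x y, th x y -> th y x) /\
  (forall x y z, th x y -> th y z -> th x z) /\
  (forall x1 y1 x2 y2, th x1 y1 -> th x2 y2 -> th (meet x1 x2) (meet y1 y2)) /\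
  (forall x1 y1 x2 y2, th x1 y1 -> th x2 y2 -> th (join x1 x2) (join y1 y2)) /\
  (forall x y, th x y -> th (pstar x) (pstar y)) /\
  (forall x y, th x y -> th (dprime x) (dprime y)).

Definition simple (A : sig_alg) : Prop :=
  (exists x y : A, x <> y) /\
  forall th : A -> A -> Prop, is_congruence th ->
    (forall x y, th x y -> x = y) \/ (forall x y : A, th x y).

Definition prod_alg (I : Type) (F : I -> sig_alg) : sig_alg :=
  {| car := forall i, F i;
     meet := fun f g i => meet (f i) (g i);
     join := fun f g i => join (f i) (g i);
     pstar := fun f i => pstar (f i);
     dprime := fun f i => dprime (f i);
     bot := fun i => bot;
     top := fun i => top |}.

Definition alg_class := sig_alg -> Prop.

Definition closed_H (C : alg_class) : Prop :=
  forall (A B : sig_alg) (f : A -> B), C A -> is_hom f -> surjective f -> C B.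
Definition closed_S (C : alg_class) : Prop :=
  forall (A B : sig_alg) (f : B -> A), C A -> is_hom f -> injective f -> C B.
Definition closed_P (C : alg_class) : Prop :=
  forall (I : Type) (F : I -> sig_alg), (forall i, C (F i)) -> C (prod_alg I F).

Definition is_variety (C : alg_class) : Prop :=
  closed_H C /\ closed_S C /\ closed_P C.

Definition gen_variety (K : alg_class) : alg_class :=
  fun A => forall C : alg_class, is_variety C -> (forall B, K B -> C B) -> C A.

Definition finite_alg (A : sig_alg) : Prop :=
  exists l : list A, forall x : A, In x l.

Inductive generated {A : sig_alg} (g : list A) : A -> Prop :=
  | gen_in : forall x, In x g -> generated g x
  | gen_meet : forall x y, generated g x -> generated g y -> generated g (meet x y)
  | gen_join : forall x y, generated g x -> generated g y -> generated g (join x y)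
  | gen_pstar : forall x, generated g x -> generated g (pstar x)
  | gen_dprime : forall x, generated g x -> generated g (dprime x)
  | gen_bot : generated g bot
  | gen_top : generated g top.

Definition fin_generated (A : sig_alg) : Prop :=
  exists g : list A, forall x : A, generated g x.

Definition locally_finite (C : alg_class) : Prop :=
  forall A, C A -> fin_generated A -> finite_alg A.

(* In a simple member of M_n the term [disc n x y] is [top] when [x = y] and [bot]
   otherwise: it is a fixed point of [x |-> x'*], and cutting down by such an element is a
   congruence. Hence a homomorphism from a subalgebra of a member of K onto a non-trivial
   algebra is injective, so every simple section of a member of K embeds into it.
   The algebras of V(K) all of whose finite simple sections embed into members of K form a
   class closed under H and S; it is also closed under P: a finite simple section of a
   product is already a section of a finitely generated, hence finite, subalgebra, and on
   a finite algebra the disc term forces the kernel of some projection to lie inside the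
   kernel of the homomorphism onto the simple algebra. This class therefore contains V(K). *)

From Stdlib Require Import List Classical ProofIrrelevance FunctionalExtensionality IndefiniteDescription.
Import ListNotations.

Section Lattice.
Variable A : sig_alg.
Hypothesis HB : is_bdl A.

Lemma meet_assoc (x y z : A) : meet x (meet y z) = meet (meet x y) z. Proof. apply HB. Qed.
Lemma meet_comm (x y : A) : meet x y = meet y x. Proof. apply HB. Qed.
Lemma join_comm (x y : A) : join x y = join y x. Proof. apply HB. Qed.
Lemma meet_join_absorb (x y : A) : meet x (join x y) = x. Proof. apply HB. Qed.
Lemma join_meet_absorb (x y : A) : join x (meet x y) = x. Proof. apply HB. Qed.
Lemma meet_join_distr_l (x y z : A) : meet x (join y z) = join (meet x y) (meet x z).
Proof. apply HB. Qed.
Lemma join_bot_r (x : A) : join x bot = x. Proof. apply HB. Qed.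
Lemma meet_top_r (x : A) : meet x top = x. Proof. apply HB. Qed.

Lemma meet_idem (x : A) : meet x x = x.
Proof.
  transitivity (meet x (join x (meet x x))).
  - now rewrite join_meet_absorb.
  - apply meet_join_absorb.
Qed.

Lemma meet_top_l (x : A) : meet top x = x.
Proof. rewrite meet_comm; apply meet_top_r. Qed.

Lemma meet_bot_r (x : A) : meet x bot = bot.
Proof.
  rewrite meet_comm. transitivity (meet bot (join bot x)).
  - now rewrite join_comm, join_bot_r.
  - apply meet_join_absorb.
Qed.

Lemma join_top_r (x : A) : join x top = top.
Proof.
  rewrite join_comm. transitivity (join top (meet top x)).
  - now rewrite meet_top_l.
  - apply join_meet_absorb.
Qed.

Lemma meet_join_distr_r (x y z : A) : meet (join x y) z = join (meet x z) (meet y z).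
Proof. now rewrite meet_comm, meet_join_distr_l, (meet_comm z x), (meet_comm z y). Qed.

Lemma meet_meet_distr_r (x y z : A) : meet (meet x y) z = meet (meet x z) (meet y z).
Proof.
  rewrite <- (meet_assoc x z), (meet_assoc z y z), (meet_comm z y), <- (meet_assoc y z z).
  now rewrite meet_idem, (meet_assoc x y z).
Qed.

Lemma le_refl (x : A) : le x x. Proof. apply meet_idem. Qed.

Lemma le_trans (x y z : A) : le x y -> le y z -> le x z.
Proof. unfold le; intros hxy hyz. now rewrite <- hxy, <- meet_assoc, hyz. Qed.

Lemma le_antisym (x y : A) : le x y -> le y x -> x = y.
Proof. unfold le; intros hxy hyx. now rewrite <- hxy, meet_comm. Qed.

Lemma le_meet (x y z : A) : le z x -> le z y -> le z (meet x y).
Proof. unfold le; intros hx hy. now rewrite meet_assoc, hx, hy. Qed.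

Lemma meet_le_l (x y : A) : le (meet x y) x.
Proof. unfold le. now rewrite (meet_comm x y), <- meet_assoc, meet_idem. Qed.

Lemma meet_le_r (x y : A) : le (meet x y) y.
Proof. unfold le. now rewrite <- meet_assoc, meet_idem. Qed.

Lemma join_le (x y z : A) : le x z -> le y z -> le (join x y) z.
Proof. unfold le; intros hx hy. now rewrite meet_join_distr_r, hx, hy. Qed.

Lemma le_top (x : A) : le x top. Proof. apply meet_top_r. Qed.

Lemma le_top_inv (x : A) : le top x -> x = top.
Proof. intro h. apply le_antisym; auto using le_top. Qed.

Lemma le_bot_inv (x : A) : le x bot -> x = bot.
Proof. unfold le. intro h. now rewrite <- h, meet_bot_r. Qed.

Lemma meet_le_compat (a b c d : A) : le a b -> le c d -> le (meet a c) (meet b d).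
Proof.
  intros hab hcd. apply le_meet.
  - apply le_trans with a; auto using meet_le_l.
  - apply le_trans with c; auto using meet_le_r.
Qed.

Lemma meet_eq_top (a b : A) : meet a b = top -> a = top /\ b = top.
Proof. intro h. split; apply le_top_inv; rewrite <- h; auto using meet_le_l, meet_le_r. Qed.

Lemma join_list_bot (l : list A) :
  (forall x, In x l -> x = bot) -> fold_right join bot l = bot.
Proof.
  induction l as [|a l IH]; simpl; auto. intro h.
  rewrite IH, (h a); auto using join_bot_r.
Qed.

Lemma join_list_top (l : list A) : In top l -> fold_right join bot l = top.
Proof.
  induction l as [|a l IH]; simpl; [tauto|]. intros [->|h].
  - now rewrite join_comm, join_top_r.
  - now rewrite IH, join_top_r.
Qed.
End Lattice.

Section Pseudocomplement.
Variable A : sig_alg.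
Hypothesis HB : is_bdl A.
Hypothesis HP : is_pseudocompl A.

Lemma le_pstar (x y : A) : meet x y = bot -> le y (pstar x). Proof. apply HP. Qed.

Lemma meet_pstar (x : A) : meet x (pstar x) = bot. Proof. apply HP, le_refl, HB. Qed.

Lemma pstar_bot : pstar (@bot A) = top.
Proof. apply le_top_inv, le_pstar; auto. apply meet_top_r, HB. Qed.

Lemma le_pstar_pstar (x : A) : le x (pstar (pstar x)).
Proof. apply le_pstar. rewrite meet_comm; auto using meet_pstar. Qed.

Lemma pstar_antimono (x y : A) : le x y -> le (pstar y) (pstar x).
Proof.
  intro h. apply le_pstar, le_bot_inv; auto. rewrite <- (meet_pstar y).
  apply meet_le_compat; auto using le_refl.
Qed.

Lemma pstar_pstar_pstar (x : A) : pstar (pstar (pstar x)) = pstar x.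
Proof.
  apply le_antisym; auto using le_pstar_pstar.
  apply pstar_antimono, le_pstar_pstar.
Qed.

Lemma pstar_eq_top (y : A) : pstar y = top -> y = bot.
Proof. intro h. now rewrite <- (meet_pstar y), h, meet_top_r. Qed.

(* Together with [meet_pstar] and [pstar_bot] this makes pseudocomplementation equational. *)
Lemma meet_pstar_meet (x y : A) : meet y (pstar (meet x y)) = meet y (pstar x).
Proof.
  apply le_antisym; auto; apply le_meet; auto using meet_le_l; apply le_pstar.
  - rewrite meet_assoc; auto. apply meet_pstar.
  - apply le_bot_inv; auto. rewrite <- (meet_pstar x).
    apply meet_le_compat; auto using meet_le_l, meet_le_r.
Qed.
End Pseudocomplement.

(* [star_imp p q = top] iff [p <= q**]. *)
Definition star_imp {A : sig_alg} (p q : A) : A := pstar (meet p (pstar q)).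
Definition gstar {A : sig_alg} (x : A) : A := pstar (dprime x).
Definition agree {A : sig_alg} (x y : A) : A :=
  meet (meet (star_imp (pstar x) (pstar y)) (star_imp (pstar y) (pstar x)))
       (meet (star_imp (gstar x) (gstar y)) (star_imp (gstar y) (gstar x))).

Definition disc (n : nat) {A : sig_alg} (x y : A) : A :=
  iter_ps n (meet (agree x y) (gstar (agree x y))).

Section Mn.
Variable n : nat.
Variable A : sig_alg.
Hypothesis HM : in_Mn n A.

Let HB : is_bdl A. Proof. apply HM. Qed.
Let HP : is_pseudocompl A. Proof. apply HM. Qed.
Let HD : is_demorgan A. Proof. apply HM. Qed.
Let regularity (x y : A) : le (meet x (dprime (pstar (dprime x)))) (join y (pstar y)).
Proof. apply HM. Qed.
Let iter_ps_stable (x : A) : iter_ps n (meet x (gstar x)) = iter_ps (S n) (meet x (gstar x)).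
Proof. apply HM. Qed.

Lemma dprime_dprime (x : A) : dprime (dprime x) = x. Proof. apply HD. Qed.
Lemma dprime_meet (x y : A) : dprime (meet x y) = join (dprime x) (dprime y). Proof. apply HD. Qed.
Lemma dprime_bot : dprime (@bot A) = top. Proof. apply HD. Qed.
Lemma dprime_top : dprime (@top A) = bot. Proof. apply HD. Qed.

Lemma gstar_top : gstar (@top A) = top.
Proof. unfold gstar. now rewrite dprime_top, pstar_bot. Qed.

Lemma gstar_eq_top (y : A) : gstar y = top -> y = top.
Proof. intro h. apply pstar_eq_top in h; auto. now rewrite <- (dprime_dprime y), h, dprime_bot. Qed.

Lemma iter_ps_top k : iter_ps k (@top A) = top.
Proof. induction k as [|k IH]; simpl; auto. now rewrite IH; apply gstar_top. Qed.

Lemma iter_ps_eq_top k (y : A) : iter_ps k y = top -> y = top.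
Proof. induction k as [|k IH]; simpl; auto. intro h. now apply IH, gstar_eq_top. Qed.

Lemma star_imp_eq_top (p q : A) : star_imp p q = top -> le p (pstar (pstar q)).
Proof.
  unfold star_imp. intro h. apply pstar_eq_top in h; auto.
  apply le_pstar; auto. now rewrite meet_comm.
Qed.

Lemma disc_refl (x : A) : disc n x x = top.
Proof.
  assert (hs : forall p : A, star_imp p p = top).
  { intro p. unfold star_imp. now rewrite meet_pstar, pstar_bot. }
  unfold disc, agree. rewrite !hs, !meet_top_r, gstar_top, meet_top_r; auto.
  apply iter_ps_top.
Qed.

Lemma le_of_pstar_gstar (x y : A) : pstar x = pstar y -> gstar x = gstar y -> le x y.
Proof.
  intros hs hg. unfold gstar in hg.
  set (w := meet x (dprime (pstar (dprime x)))).
  assert (hx : x = join (meet x y) w).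
  { unfold w. rewrite <- meet_join_distr_l, hg; auto.
    rewrite <- (dprime_dprime y) at 1.
    now rewrite <- dprime_meet, meet_pstar, dprime_bot, meet_top_r. }
  assert (hw : le w (meet x y)).
  { assert (h : le w (meet x (join y (pstar y)))).
    { apply le_meet; auto. apply meet_le_l; auto. apply regularity. }
    now rewrite meet_join_distr_l, <- hs, meet_pstar, join_bot_r in h. }
  apply le_trans with (meet x y); auto using meet_le_r.
  rewrite hx at 1. apply join_le; auto using le_refl.
Qed.

Lemma agree_eq_top (x y : A) : agree x y = top -> x = y.
Proof.
  unfold agree. intro h.
  apply meet_eq_top in h as [h1 h2]; auto.
  apply meet_eq_top in h1 as [a1 a2]; auto. apply meet_eq_top in h2 as [b1 b2]; auto.
  apply star_imp_eq_top in a1, a2, b1, b2. rewrite pstar_pstar_pstar in a1, a2; auto.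
  assert (es : pstar x = pstar y) by (apply le_antisym; auto).
  assert (eg : gstar x = gstar y).
  { unfold gstar in *. rewrite pstar_pstar_pstar in b1, b2; auto. apply le_antisym; auto. }
  apply le_antisym; auto; apply le_of_pstar_gstar; auto.
Qed.

Lemma disc_eq_top (x y : A) : disc n x y = top -> x = y.
Proof.
  unfold disc. intro h. apply iter_ps_eq_top, meet_eq_top in h as [h _]; auto.
  now apply agree_eq_top.
Qed.

Lemma gstar_disc (x y : A) : gstar (disc n x y) = disc n x y.
Proof. symmetry. apply iter_ps_stable. Qed.

Lemma meet_congruence (v : A) : gstar v = v -> is_congruence (fun a b => meet a v = meet b v).
Proof.
  intro hv.
  assert (hvv : meet (dprime v) v = bot) by (rewrite <- hv at 2; apply meet_pstar; auto).
  split; [|split; [|split; [|split; [|split; [|split]]]]].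
  - reflexivity.
  - intros a b h; auto.
  - intros a b c h1 h2; congruence.
  - intros a1 b1 a2 b2 h1 h2. now rewrite !(meet_meet_distr_r _ HB _ _ v), h1, h2.
  - intros a1 b1 a2 b2 h1 h2. now rewrite !meet_join_distr_r, h1, h2.
  - intros a b h. rewrite (meet_comm _ HB (pstar a)), (meet_comm _ HB (pstar b)).
    rewrite <- (meet_pstar_meet _ HB HP a v), <- (meet_pstar_meet _ HB HP b v).
    now rewrite h.
  - intros a b h.
    assert (E : forall c, meet (dprime c) v = meet (dprime (meet c v)) v).
    { intro c. now rewrite dprime_meet, meet_join_distr_r, hvv, join_bot_r. }
    now rewrite E, h, <- E.
Qed.

Lemma disc_simple (x y : A) : simple A -> x <> y -> disc n x y = bot.
Proof.
  intros [_ hs] hne. set (v := disc n x y).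
  destruct (hs _ (meet_congruence v (gstar_disc x y))) as [hid | htot].
  - exfalso. apply hne, disc_eq_top. symmetry. apply hid.
    now rewrite meet_top_l, meet_idem.
  - specialize (htot top bot). simpl in htot.
    now rewrite meet_top_l, meet_comm, meet_bot_r in htot.
Qed.
End Mn.

Inductive term :=
  | TVar (k : nat) | TMeet (a b : term) | TJoin (a b : term)
  | TStar (a : term) | TPrime (a : term) | TBot | TTop.

Fixpoint eval {A : sig_alg} (e : nat -> A) (t : term) : A :=
  match t with
  | TVar k => e k
  | TMeet a b => meet (eval e a) (eval e b)
  | TJoin a b => join (eval e a) (eval e b)
  | TStar a => pstar (eval e a)
  | TPrime a => dprime (eval e a)
  | TBot => bot
  | TTop => top
  end.

Definition holds (A : sig_alg) (p : term * term) : Prop :=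
  forall e : nat -> A, eval e (fst p) = eval e (snd p).

Fixpoint term_iter_ps (k : nat) (t : term) : term :=
  match k with O => t | S k => TStar (TPrime (term_iter_ps k t)) end.

Lemma eval_term_iter_ps {A : sig_alg} (e : nat -> A) k t :
  eval e (term_iter_ps k t) = iter_ps k (eval e t).
Proof. induction k; simpl; congruence. Qed.

Lemma eval_ext {A : sig_alg} (e1 e2 : nat -> A) t :
  (forall k, e1 k = e2 k) -> eval e1 t = eval e2 t.
Proof. intro h; induction t; simpl; congruence. Qed.

Lemma hom_eval {A B : sig_alg} (f : A -> B) (e : nat -> A) t :
  is_hom f -> f (eval e t) = eval (fun k => f (e k)) t.
Proof. intros (f1 & f2 & f3 & f4 & f5 & f6). induction t; simpl; congruence. Qed.

Lemma eval_prod I (F : I -> sig_alg) (e : nat -> prod_alg I F) t i :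
  eval e t i = eval (fun k => e k i) t.
Proof. induction t; simpl; congruence. Qed.

Lemma holds_hom_image (A B : sig_alg) (f : A -> B) p :
  is_hom f -> surjective f -> holds A p -> holds B p.
Proof.
  intros hf sf h e.
  set (e' := fun k => proj1_sig (constructive_indefinite_description _ (sf (e k)))).
  assert (he : forall k, f (e' k) = e k) by (intro k; apply proj2_sig).
  rewrite !(eval_ext e (fun k => f (e' k))) by auto.
  now rewrite <- !hom_eval, h.
Qed.

Lemma holds_sub (A B : sig_alg) (f : B -> A) p :
  is_hom f -> injective f -> holds A p -> holds B p.
Proof. intros hf inj h e. apply inj. rewrite !hom_eval by auto. apply h. Qed.

Lemma holds_prod I (F : I -> sig_alg) p :
  (forall i, holds (F i) p) -> holds (prod_alg I F) p.
Proof.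
  intros h e. apply functional_extensionality_dep. intro i.
  rewrite !eval_prod. apply h.
Qed.

Definition vx := TVar 0.
Definition vy := TVar 1.
Definition vz := TVar 2.

(* The pseudocomplement condition becomes [x /\ x* = 0], [y /\ (x /\ y)* = y /\ x*] and
   [0* = 1]; an inequality [u <= w] is stated as [u /\ w = u]. *)
Definition Mn_identities (n : nat) : list (term * term) :=
 [ (TMeet vx (TMeet vy vz), TMeet (TMeet vx vy) vz);
   (TJoin vx (TJoin vy vz), TJoin (TJoin vx vy) vz);
   (TMeet vx vy, TMeet vy vx);
   (TJoin vx vy, TJoin vy vx);
   (TMeet vx (TJoin vx vy), vx);
   (TJoin vx (TMeet vx vy), vx);
   (TMeet vx (TJoin vy vz), TJoin (TMeet vx vy) (TMeet vx vz));
   (TJoin vx TBot, vx);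
   (TMeet vx TTop, vx);
   (TMeet vx (TStar vx), TBot);
   (TMeet vy (TStar (TMeet vx vy)), TMeet vy (TStar vx));
   (TStar TBot, TTop);
   (TPrime (TPrime vx), vx);
   (TPrime (TMeet vx vy), TJoin (TPrime vx) (TPrime vy));
   (TPrime (TJoin vx vy), TMeet (TPrime vx) (TPrime vy));
   (TPrime TBot, TTop);
   (TPrime TTop, TBot);
   (TMeet (TMeet vx (TPrime (TStar (TPrime vx)))) (TJoin vy (TStar vy)),
      TMeet vx (TPrime (TStar (TPrime vx))));
   (term_iter_ps n (TMeet vx (TStar (TPrime vx))),
      term_iter_ps (S n) (TMeet vx (TStar (TPrime vx)))) ].

Definition env3 {A : sig_alg} (x y z : A) : nat -> A :=
  fun k => match k with 0 => x | 1 => y | _ => z end.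

Lemma Mn_identities_hold n A : in_Mn n A -> Forall (holds A) (Mn_identities n).
Proof.
  intro HM. pose proof HM as (HB & HP & HD & Hreg & Hit).
  pose proof HB as (b1 & b2 & b3 & b4 & b5 & b6 & b7 & b8 & b9).
  pose proof HD as (d1 & d2 & d3 & d4 & d5).
  repeat constructor; intro e; simpl; auto.
  - apply meet_pstar; auto.
  - apply meet_pstar_meet; auto.
  - apply pstar_bot; auto.
  - apply Hreg.
  - rewrite !eval_term_iter_ps. apply Hit.
Qed.

Lemma in_Mn_of_identities n A : Forall (holds A) (Mn_identities n) -> in_Mn n A.
Proof.
  intro h. unfold Mn_identities in h. repeat rewrite Forall_cons_iff in h.
  destruct h as (h1 & h2 & h3 & h4 & h5 & h6 & h7 & h8 & h9 & h10 & h11 & h12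
                 & h13 & h14 & h15 & h16 & h17 & h18 & h19 & _).
  assert (HB : is_bdl A).
  { split; [|split; [|split; [|split; [|split; [|split; [|split; [|split]]]]]]].
    - intros x y z; exact (h1 (env3 x y z)).
    - intros x y z; exact (h2 (env3 x y z)).
    - intros x y; exact (h3 (env3 x y x)).
    - intros x y; exact (h4 (env3 x y x)).
    - intros x y; exact (h5 (env3 x y x)).
    - intros x y; exact (h6 (env3 x y x)).
    - intros x y z; exact (h7 (env3 x y z)).
    - intros x; exact (h8 (env3 x x x)).
    - intros x; exact (h9 (env3 x x x)). }
  split; [exact HB|]. split; [|split; [|split]].
  - intros x y. specialize (h10 (env3 x x x)). specialize (h11 (env3 x y x)).
    specialize (h12 (env3 x x x)). simpl in h10, h11, h12. unfold le. split.
    + intro hxy. now rewrite <- h11, hxy, h12, meet_top_r.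
    + intro hle. now rewrite <- hle, meet_assoc, (meet_comm _ HB x y), <- meet_assoc,
        h10, meet_bot_r.
  - split; [|split; [|split; [|split]]].
    + intros x; exact (h13 (env3 x x x)).
    + intros x y; exact (h14 (env3 x y x)).
    + intros x y; exact (h15 (env3 x y x)).
    + exact (h16 (env3 top top top)).
    + exact (h17 (env3 top top top)).
  - intros x y; exact (h18 (env3 x y x)).
  - intros x. specialize (h19 (env3 x x x)). simpl in h19.
    now rewrite !eval_term_iter_ps in h19.
Qed.

Lemma Mn_variety n : is_variety (in_Mn n).
Proof.
  split; [|split].
  - intros A B f hA hf sf. apply Mn_identities_hold in hA. apply in_Mn_of_identities.
    eapply Forall_impl; [|exact hA]. intros p. now apply (holds_hom_image A B f).
  - intros A B f hA hf inj. apply Mn_identities_hold in hA. apply in_Mn_of_identities.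
    eapply Forall_impl; [|exact hA]. intros p. now apply (holds_sub A B f).
  - intros I F hF. apply in_Mn_of_identities, Forall_forall. intros p hp.
    apply holds_prod. intro i.
    apply (proj1 (Forall_forall _ _) (Mn_identities_hold n (F i) (hF i))), hp.
Qed.

Lemma hom_comp {A B C : sig_alg} (f : A -> B) (g : B -> C) :
  is_hom f -> is_hom g -> is_hom (fun x => g (f x)).
Proof.
  intros (f1 & f2 & f3 & f4 & f5 & f6) (g1 & g2 & g3 & g4 & g5 & g6).
  repeat split; intros; now rewrite ?f1, ?f2, ?f3, ?f4, ?f5, ?f6, ?g1, ?g2, ?g3, ?g4, ?g5, ?g6.
Qed.

Lemma hom_id (A : sig_alg) : is_hom (fun x : A => x).
Proof. repeat split. Qed.

Lemma hom_proj I (F : I -> sig_alg) j : is_hom (fun x : prod_alg I F => x j).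
Proof. repeat split. Qed.

Lemma hom_disc n {A B : sig_alg} (f : A -> B) x y :
  is_hom f -> f (disc n x y) = disc n (f x) (f y).
Proof.
  intros hf. pose proof hf as (f1 & f2 & f3 & f4 & f5 & f6).
  unfold disc. induction n as [|k IH]; simpl.
  - unfold agree, star_imp, gstar. now repeat (rewrite f1 || rewrite f3 || rewrite f4).
  - now rewrite f3, f4, IH.
Qed.

Lemma hom_join_list {A B : sig_alg} (f : A -> B) l :
  is_hom f -> f (fold_right join bot l) = fold_right join bot (map f l).
Proof. intros (f1 & f2 & f3 & f4 & f5 & f6). induction l; simpl; congruence. Qed.

Lemma simple_top_neq_bot (A : sig_alg) : is_bdl A -> simple A -> @top A <> bot.
Proof.
  intros HB [[x [y hxy]] _] e. apply hxy.
  now rewrite <- (meet_top_r _ HB x), <- (meet_top_r _ HB y), e, !meet_bot_r.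
Qed.

Lemma bijective_hom_inverse {A B : sig_alg} (f : A -> B) :
  is_hom f -> injective f -> surjective f -> exists g : B -> A, is_hom g /\ injective g.
Proof.
  intros hf inj sf.
  set (g := fun b => proj1_sig (constructive_indefinite_description _ (sf b))).
  assert (fg : forall b, f (g b) = b) by (intro b; apply proj2_sig).
  pose proof hf as (f1 & f2 & f3 & f4 & f5 & f6).
  exists g. split.
  - repeat split; intros; apply inj; now rewrite ?f1, ?f2, ?f3, ?f4, ?f5, ?f6, !fg.
  - intros a b e. now rewrite <- (fg a), <- (fg b), e.
Qed.

Record sub_closed (A : sig_alg) (P : A -> Prop) : Prop := {
  closed_meet : forall x y, P x -> P y -> P (meet x y);
  closed_join : forall x y, P x -> P y -> P (join x y);
  closed_pstar : forall x, P x -> P (pstar x);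
  closed_dprime : forall x, P x -> P (dprime x);
  closed_bot : P bot;
  closed_top : P top }.

Definition subalg (A : sig_alg) (P : A -> Prop) (h : sub_closed A P) : sig_alg :=
  {| car := {x : A | P x};
     meet := fun x y => exist _ (meet (proj1_sig x) (proj1_sig y))
                          (closed_meet _ _ h _ _ (proj2_sig x) (proj2_sig y));
     join := fun x y => exist _ (join (proj1_sig x) (proj1_sig y))
                          (closed_join _ _ h _ _ (proj2_sig x) (proj2_sig y));
     pstar := fun x => exist _ (pstar (proj1_sig x)) (closed_pstar _ _ h _ (proj2_sig x));
     dprime := fun x => exist _ (dprime (proj1_sig x)) (closed_dprime _ _ h _ (proj2_sig x));
     bot := exist _ bot (closed_bot _ _ h);
     top := exist _ top (closed_top _ _ h) |}.

Lemma hom_val A P h : is_hom (fun x : subalg A P h => proj1_sig x).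
Proof. repeat split. Qed.

Lemma injective_val A P h : injective (fun x : subalg A P h => proj1_sig x).
Proof. intros [x px] [y py] e. simpl in e. subst. f_equal. apply proof_irrelevance. Qed.

Lemma generated_closed (S : sig_alg) (g : list S) : sub_closed S (generated g).
Proof. constructor; intros; now constructor. Qed.

Lemma list_preimage {X Y : Type} (f : X -> Y) (l : list Y) :
  (forall y, In y l -> exists x, f x = y) ->
  exists g, forall y, In y l -> exists x, In x g /\ f x = y.
Proof.
  induction l as [|y l IH]; intro h.
  - exists []. intros y [].
  - destruct IH as [g hg]; [intros; apply h; simpl; auto|].
    destruct (h y) as [x hx]; [simpl; auto|].
    exists (x :: g). intros z [<-|hz].
    + exists x; simpl; auto.
    + destruct (hg z hz) as [w [hw e]]. exists w; simpl; auto.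
Qed.

Lemma list_filter_prop {T : Type} (P : T -> Prop) (L : list T) :
  exists l, forall p, In p l <-> In p L /\ P p.
Proof.
  induction L as [|a L [l hl]].
  - exists []. simpl. tauto.
  - destruct (classic (P a)) as [ha|ha]; [exists (a :: l) | exists l];
      intro p; simpl; rewrite hl; split; intuition congruence.
Qed.

Lemma generated_fin_generated (S : sig_alg) (g : list S) :
  fin_generated (subalg S (generated g) (generated_closed S g)).
Proof.
  set (S0 := subalg S (generated g) (generated_closed S g)).
  destruct (list_preimage (fun s : S0 => proj1_sig s) g) as [g0 hg0].
  { intros y hy. now exists (exist _ y (gen_in g y hy)). }
  exists g0.
  assert (hgen : forall s, generated g s -> forall pf, @generated S0 g0 (exist _ s pf)).
  { assert (E : forall s (pf pf' : generated g s),
              exist (fun x => generated g x) s pf = exist (fun x => generated g x) s pf')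
      by (intros; f_equal; apply proof_irrelevance).
    intros s hs; induction hs; intro pf.
    - destruct (hg0 x H) as [[x' pf'] [hs0 e]]. simpl in e. subst x'.
      rewrite (E _ pf pf'). now apply gen_in.
    - rewrite (E _ pf (closed_meet _ _ (generated_closed S g) x y hs1 hs2)).
      exact (gen_meet g0 (exist _ x hs1) (exist _ y hs2) (IHhs1 hs1) (IHhs2 hs2)).
    - rewrite (E _ pf (closed_join _ _ (generated_closed S g) x y hs1 hs2)).
      exact (gen_join g0 (exist _ x hs1) (exist _ y hs2) (IHhs1 hs1) (IHhs2 hs2)).
    - rewrite (E _ pf (closed_pstar _ _ (generated_closed S g) x hs)).
      exact (gen_pstar g0 (exist _ x hs) (IHhs hs)).
    - rewrite (E _ pf (closed_dprime _ _ (generated_closed S g) x hs)).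
      exact (gen_dprime g0 (exist _ x hs) (IHhs hs)).
    - rewrite (E _ pf (closed_bot _ _ (generated_closed S g))). exact (gen_bot g0).
    - rewrite (E _ pf (closed_top _ _ (generated_closed S g))). exact (gen_top g0). }
  intros [s pf]. auto.
Qed.

Definition section_of (A' T : sig_alg) : Prop :=
  exists (S : sig_alg) (i : S -> T) (f : S -> A'),
    is_hom i /\ injective i /\ is_hom f /\ surjective f.

Definition embeds_in (K : alg_class) (A : sig_alg) : Prop :=
  exists B : sig_alg, K B /\ exists e : A -> B, is_hom e /\ injective e.

Definition simple_sections_embed (K : alg_class) (T : sig_alg) : Prop :=
  forall A', section_of A' T -> finite_alg A' -> simple A' -> embeds_in K A'.

Lemma section_of_refl (A : sig_alg) : section_of A A.
Proof.
  exists A, (fun x => x), (fun x => x).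
  split; [apply hom_id|]. split; [intros x y e; exact e|].
  split; [apply hom_id|]. intro y. now exists y.
Qed.

Lemma section_of_sub (A' A B : sig_alg) (g : B -> A) :
  section_of A' B -> is_hom g -> injective g -> section_of A' A.
Proof.
  intros (S & i & f & hi & ii & hf & sf) hg ig.
  exists S, (fun x => g (i x)), f. split; [now apply hom_comp|]. split; auto.
  intros x y e. now apply ii, ig.
Qed.

Lemma section_of_quot (A' A B : sig_alg) (h : A -> B) :
  section_of A' B -> is_hom h -> surjective h -> section_of A' A.
Proof.
  intros (S & i & f & hi & ii & hf & sf) hh sh.
  pose proof hh as (h1 & h2 & h3 & h4 & h5 & h6).
  pose proof hi as (i1 & i2 & i3 & i4 & i5 & i6).
  assert (hc : sub_closed A (fun a => exists s, h a = i s)).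
  { constructor.
    - intros x y [s1 e1] [s2 e2]. exists (meet s1 s2). rewrite h1, i1; congruence.
    - intros x y [s1 e1] [s2 e2]. exists (join s1 s2). rewrite h2, i2; congruence.
    - intros x [s e]. exists (pstar s). rewrite h3, i3; congruence.
    - intros x [s e]. exists (dprime s). rewrite h4, i4; congruence.
    - exists bot. now rewrite h5, i5.
    - exists top. now rewrite h6, i6. }
  set (k := fun y : subalg A _ hc =>
              proj1_sig (constructive_indefinite_description _ (proj2_sig y))).
  assert (hk : forall y : subalg A _ hc, i (k y) = h (proj1_sig y)) by (intro y; unfold k; now destruct constructive_indefinite_description).
  assert (hkh : is_hom k).
  { repeat split; intros; apply ii;
      rewrite ?i1, ?i2, ?i3, ?i4, ?i5, ?i6, !hk; simpl;
      now rewrite ?h1, ?h2, ?h3, ?h4, ?h5, ?h6, ?hk. }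
  exists (subalg A _ hc), (fun y => proj1_sig y), (fun y => f (k y)).
  split; [apply hom_val|]. split; [apply injective_val|]. split; [now apply hom_comp|].
  intro a. destruct (sf a) as [s <-]. destruct (sh (i s)) as [x hx].
  exists (exist _ x (ex_intro _ s hx)). f_equal. apply ii. now rewrite hk.
Qed.

Lemma section_of_factor (S T A' : sig_alg) (p : S -> T) (f : S -> A') :
  is_hom p -> is_hom f -> surjective f -> (forall a b, p a = p b -> f a = f b) ->
  section_of A' T.
Proof.
  intros hp hf sf hker.
  pose proof hp as (p1 & p2 & p3 & p4 & p5 & p6).
  pose proof hf as (f1 & f2 & f3 & f4 & f5 & f6).
  assert (hc : sub_closed T (fun y => exists s, p s = y)).
  { constructor.
    - intros x y [s1 <-] [s2 <-]. now exists (meet s1 s2).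
    - intros x y [s1 <-] [s2 <-]. now exists (join s1 s2).
    - intros x [s <-]. now exists (pstar s).
    - intros x [s <-]. now exists (dprime s).
    - now exists bot.
    - now exists top. }
  set (k := fun y : subalg T _ hc =>
              proj1_sig (constructive_indefinite_description _ (proj2_sig y))).
  assert (hk : forall y : subalg T _ hc, p (k y) = proj1_sig y) by (intro y; apply proj2_sig).
  exists (subalg T _ hc), (fun y => proj1_sig y), (fun y => f (k y)).
  split; [apply hom_val|]. split; [apply injective_val|]. split; [repeat split|].
  - intros x y. rewrite <- f1. apply hker. now rewrite p1, !hk.
  - intros x y. rewrite <- f2. apply hker. now rewrite p2, !hk.
  - intros x. rewrite <- f3. apply hker. now rewrite p3, !hk.
  - intros x. rewrite <- f4. apply hker. now rewrite p4, !hk.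
  - rewrite <- f5. apply hker. now rewrite p5, !hk.
  - rewrite <- f6. apply hker. now rewrite p6, !hk.
  - intro a. destruct (sf a) as [s <-].
    exists (exist _ (p s) (ex_intro _ s eq_refl)). apply hker. now rewrite hk.
Qed.

Lemma section_of_fin_generated (A' T : sig_alg) :
  section_of A' T -> finite_alg A' ->
  exists (S : sig_alg) (i : S -> T) (f : S -> A'),
    fin_generated S /\ is_hom i /\ injective i /\ is_hom f /\ surjective f.
Proof.
  intros (S & i & f & hi & ii & hf & sf) [l hl].
  destruct (list_preimage f l) as [g hg]; [intros; apply sf|].
  set (S0 := subalg S (generated g) (generated_closed S g)).
  exists S0, (fun x : S0 => i (proj1_sig x)), (fun x : S0 => f (proj1_sig x)).
  split; [apply generated_fin_generated|].
  split; [apply (hom_comp (fun x : S0 => proj1_sig x) i); [apply hom_val | exact hi]|].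
  split; [|split].
  - intros x y e. now apply injective_val, ii.
  - apply (hom_comp (fun x : S0 => proj1_sig x) f); [apply hom_val | exact hf].
  - intro a. destruct (hg a (hl a)) as [s [hs e]].
    now exists (exist _ s (gen_in g s hs)).
Qed.

Lemma section_in_Mn n (A' T : sig_alg) : in_Mn n T -> section_of A' T -> in_Mn n A'.
Proof.
  intros hT (S & i & f & hi & ii & hf & sf).
  destruct (Mn_variety n) as (hH & hS & _).
  apply (hH S A' f); auto. now apply (hS T S i).
Qed.

Lemma hom_injective_of_sub_simple n (S B A' : sig_alg) (i : S -> B) (f : S -> A') :
  in_Mn n B -> simple B -> is_hom i -> injective i ->
  in_Mn n A' -> simple A' -> is_hom f -> injective f.
Proof.
  intros hB sB hi ii hA sA hf x y e. apply NNPP. intro hne.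
  apply (simple_top_neq_bot A'); [apply hA | exact sA |].
  assert (hd : disc n x y = bot).
  { apply ii. pose proof hi as (_ & _ & _ & _ & i5 & _).
    rewrite i5, hom_disc by auto. apply disc_simple; [exact hB | exact sB |].
    intro h; now apply hne, ii. }
  pose proof hf as (_ & _ & _ & _ & f5 & _).
  now rewrite <- (disc_refl n A' hA (f y)), <- e at 1; rewrite <- hom_disc, hd.
Qed.

(* The witness is the join of all elements that [f] sends to [bot]: it lies over [bot],
   yet every coordinate of it is [top], being above [disc n a b] for [a], [b] glued by
   [h j] but not by [f]. *)
Lemma simple_image_factors_through_coord n (S A' : sig_alg) (I : Type) (F : I -> sig_alg)
  (h : forall j, S -> F j) (f : S -> A') :
  finite_alg S -> (forall j, in_Mn n (F j)) -> (forall j, is_hom (h j)) ->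
  (forall a b, (forall j, h j a = h j b) -> a = b) ->
  in_Mn n A' -> simple A' -> is_hom f ->
  exists j, forall a b, h j a = h j b -> f a = f b.
Proof.
  intros [L hL] hF hh hsep hA sA hf.
  apply NNPP. intro hnot.
  assert (hall : forall j, exists a b, h j a = h j b /\ f a <> f b).
  { intro j. apply NNPP. intro hj. apply hnot. exists j. intros a b e.
    apply NNPP. intro ne. apply hj. eauto. }
  destruct (list_filter_prop (fun p => f p = bot) L) as [l hl].
  assert (hP : fold_right join bot l = top).
  { apply hsep. intro j. pose proof (hh j) as (_ & _ & _ & _ & _ & h6).
    rewrite h6, hom_join_list by auto. apply join_list_top; [apply hF|].
    destruct (hall j) as [a [b [e ne]]]. apply in_map_iff. exists (disc n a b). split.
    - rewrite hom_disc, e by auto. apply disc_refl, hF.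
    - apply hl. split; auto. rewrite hom_disc by auto. now apply disc_simple. }
  apply (simple_top_neq_bot A'); [apply hA | exact sA |].
  pose proof hf as (_ & _ & _ & _ & _ & f6).
  rewrite <- f6, <- hP, hom_join_list by auto. apply join_list_bot; [apply hA|].
  intros x hx. apply in_map_iff in hx as [p [<- hp]]. now apply hl in hp.
Qed.

Lemma gen_variety_K K (A : sig_alg) : K A -> gen_variety K A.
Proof. intros hA C _ hK. auto. Qed.

Lemma gen_variety_is_variety K : is_variety (gen_variety K).
Proof.
  split; [|split].
  - intros A B f hA hf sf C hC hK. exact (proj1 hC A B f (hA C hC hK) hf sf).
  - intros A B f hA hf inj C hC hK. exact (proj1 (proj2 hC) A B f (hA C hC hK) hf inj).
  - intros I F hF C hC hK. apply (proj2 (proj2 hC)). intro i. now apply hF.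
Qed.

Lemma gen_variety_Mn n K (A : sig_alg) :
  (forall B, K B -> in_Mn n B) -> gen_variety K A -> in_Mn n A.
Proof. intros hK hA. exact (hA _ (Mn_variety n) hK). Qed.

Lemma simple_sections_embed_sub K (A B : sig_alg) (g : B -> A) :
  simple_sections_embed K A -> is_hom g -> injective g -> simple_sections_embed K B.
Proof. intros hA hg ig A' hsec. apply hA. now apply (section_of_sub A' A B g). Qed.

Lemma simple_sections_embed_quot K (A B : sig_alg) (h : A -> B) :
  simple_sections_embed K A -> is_hom h -> surjective h -> simple_sections_embed K B.
Proof. intros hA hh sh A' hsec. apply hA. now apply (section_of_quot A' A B h). Qed.

Section SimpleSections.
Variable n : nat.
Variable K : alg_class.
Hypothesis K_Mn_simple : forall A, K A -> in_Mn n A /\ simple A.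
Hypothesis K_loc_fin : locally_finite (gen_variety K).

Let gen_variety_K_Mn (A : sig_alg) : gen_variety K A -> in_Mn n A.
Proof. apply gen_variety_Mn. intros B hB. apply K_Mn_simple, hB. Qed.

Lemma simple_sections_embed_K (B : sig_alg) : K B -> simple_sections_embed K B.
Proof.
  intros hB A' hsec _ sA. destruct (K_Mn_simple B hB) as [mB sB].
  pose proof (section_in_Mn n A' B mB hsec) as mA.
  destruct hsec as (S & i & f & hi & ii & hf & sf).
  destruct (bijective_hom_inverse f) as [g [hg ig]]; auto.
  { apply (hom_injective_of_sub_simple n S B A' i f); auto. }
  exists B. split; auto. exists (fun a => i (g a)). split; [now apply hom_comp|].
  intros a b e. now apply ig, ii.
Qed.

Lemma simple_sections_embed_prod I (F : I -> sig_alg) :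
  (forall j, gen_variety K (F j) /\ simple_sections_embed K (F j)) ->
  simple_sections_embed K (prod_alg I F).
Proof.
  intros hF A' hsec fA sA.
  destruct (section_of_fin_generated _ _ hsec fA) as (S & i & f & fgS & hi & ii & hf & sf).
  destruct (gen_variety_is_variety K) as (_ & hVS & hVP).
  assert (hP : gen_variety K (prod_alg I F)) by (apply hVP; intro j; apply hF).
  assert (hcoord : forall j, is_hom (fun s => i s j)).
  { intro j. apply (hom_comp i (fun y : prod_alg I F => y j)); auto using hom_proj. }
  destruct (simple_image_factors_through_coord n S A' I F (fun j s => i s j) f)
    as [j hj]; auto.
  - apply K_loc_fin; auto. now apply (hVS _ S i).
  - intro j. now apply gen_variety_K_Mn, hF.
  - intros a b e. apply ii, functional_extensionality_dep, e.
  - apply (section_in_Mn n A' (prod_alg I F)); auto.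
  - apply (proj2 (hF j)); auto. now apply (section_of_factor S (F j) A' (fun s => i s j) f).
Qed.

Lemma simple_sections_embed_variety :
  is_variety (fun A => gen_variety K A /\ simple_sections_embed K A).
Proof.
  destruct (gen_variety_is_variety K) as (hVH & hVS & hVP).
  split; [|split].
  - intros A B f [hA eA] hf sf. split; [now apply (hVH A B f)|].
    now apply (simple_sections_embed_quot K A B f).
  - intros A B f [hA eA] hf inj. split; [now apply (hVS A B f)|].
    now apply (simple_sections_embed_sub K A B f).
  - intros I F hF. split; [apply hVP; intro; apply hF|].
    now apply simple_sections_embed_prod.
Qed.
End SimpleSections.

Theorem theorem5p1 (n : nat) (K : alg_class)
  (hK : forall A, K A -> in_Mn n A /\ simple A)
  (hLF : locally_finite (gen_variety K)) :
  forall A : sig_alg, gen_variety K A -> finite_alg A -> simple A ->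
    exists B : sig_alg, K B /\
      exists f : A -> B, is_hom f /\ injective f.
Proof.
  intros A hA fA sA.
  assert (hsse : simple_sections_embed K A).
  { apply (hA (fun A => gen_variety K A /\ simple_sections_embed K A)).
    - exact (simple_sections_embed_variety n K hK hLF).
    - intros B hB. split; [now apply gen_variety_K | now apply (simple_sections_embed_K n K hK)]. }
  exact (hsse A (section_of_refl A) fA sA).
Qed.
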